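(* Let $q$ be an odd prime power, and let $n,k,\ell$ be integers with $\ell\ge 0$ and $2\le k\le n-(\ell+1)$ (so $0\le \ell\le n-k-1$). Let $\boldsymbol{\alpha}=(\alpha_1,\dots,\alpha_n)\in\mathbb{F}_q^n$ with pairwise distinct entries, $\boldsymbol{v}=(v_1,\dots,v_n)\in(\mathbb{F}_q^{*})^n$, and $\boldsymbol{\eta}=(\eta_0,\dots,\eta_\ell)\in\mathbb{F}_q^{\ell+1}\setminus\{\boldsymbol 0\}$. Let $\mathcal{C}$ be the $( * )$-$(\mathcal{L},\mathcal{P})$-TGRS code defined in the context. Then the $(n-k)\times n$ matrix $\boldsymbol{H}$ whose $j$-th column ($1\le j\le n$) is $$\frac{u_j}{v_j}\Big(1,\ \alpha_j,\ \dots,\ \alpha_j^{\,n-k-(\ell+2)},\ \alpha_j^{\,n-k-(\ell+1)}-(-1)^{n-1}P_j\Omega_{\ell+1},\ \alpha_j^{\,n-k-\ell}-(-1)^{n-1}P_j\Omega_{\ell},\ \dots,\ \alpha_j^{\,n-k-1}-(-1)^{n-1}P_j\Omega_{1}\Big)^{T}$$ (i.e. rows $0,\dots,n-k-(\ell+2)$ are $(\frac{u_j}{v_j}\alpha_j^{i})_j$, and for $1\le r\le \ell+1$ the row indexed $n-k-r$ is $\big(\frac{u_j}{v_j}(\alpha_j^{\,n-k-r}-(-1)^{n-1}P_j\Omega_r)\big)_j$) is a parity-check matrix of $\mathcal{C}$; that is, $\operatorname{rank}\boldsymbol{H}=n-k$ and $\boldsymbol{G}\boldsymbol{H}^{T}=\boldsymbol{0}$,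 where $\boldsymbol{G}$ is the generator matrix of $\mathcal{C}$ given in the context. Here $$\Omega_r=\sum_{t=0}^{\ell}\eta_t\,S_{t+1-r}(\alpha_1,\dots,\alpha_n),\qquad 1\le r\le \ell+1.$$
   Context: $P_j=\prod_{i=1,i\neq j}^{n}\alpha_i$ and $P=\prod_{i=1}^n\alpha_i$; $u_j=\prod_{i=1,i\neq j}^{n}(\alpha_j-\alpha_i)^{-1}$ for $1\le j\le n$. For an integer $t$, $S_t(x_1,\dots,x_n)$ is the complete homogeneous symmetric polynomial of degree $t$: $S_t=0$ if $t<0$, and $S_t=\sum_{t_1+\dots+t_n=t,\ t_i\ge0}x_1^{t_1}\cdots x_n^{t_n}$ if $t\ge0$ (so $S_0=1$). The $( * )$-$(\mathcal{L},\mathcal{P})$-TGRS code is $\mathcal{C}=\{(v_1f(\alpha_1),\dots,v_nf(\alpha_n)) : f\in\mathcal{F}_{n,k,\boldsymbol\eta}\}$, where $\mathcal{F}_{n,k,\boldsymbol\eta}=\{\sum_{i=0}^{k-1}f_ix^i+f_0\sum_{j=0}^{\ell}\eta_jx^{k+j} : f_i\in\mathbb{F}_q\}$. Its generator matrix is the $k\times n$ matrix $\boldsymbol G$ whose first row is $\big(v_j(1+\sum_{t=0}^{\ell}\eta_t\alpha_j^{k+t})\big)_{j=1}^n$ and whose row $i$ ($1\le i\le k-1$) is $(v_j\alpha_j^{i})_{j=1}^n$. A parity-check matrix of a linear $[n,k]$ code is a full-rank $(n-k)\times n$ matrix whose null space is the code. *)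

From HB Require Import structures.
From mathcomp Require Import all_boot all_order all_algebra.
Set Implicit Arguments. Unset Strict Implicit. Unset Printing Implicit Defensive.
Import Order.TTheory GRing.Theory.
Local Open Scope ring_scope.

Section TGRS.
Variables (F : fieldType) (n : nat).

Definition Pj (alpha : 'I_n -> F) (j : 'I_n) : F :=
  \prod_(i < n | i != j) alpha i.

Definition Pall (alpha : 'I_n -> F) : F := \prod_(i < n) alpha i.

Definition uj (alpha : 'I_n -> F) (j : 'I_n) : F :=
  \prod_(i < n | i != j) (alpha j - alpha i)^-1.

Definition hsym (t : int) (x : 'I_n -> F) : F :=
  match t with
  | Posz m => \sum_(e : {ffun 'I_n -> 'I_m.+1} | (\sum_(i < n) (e i : nat))%N == m)
                \prod_(i < n) x i ^+ (e i : nat)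
  | Negz _ => 0
  end.

Definition Omega (l : nat) (eta : 'I_l.+1 -> F) (alpha : 'I_n -> F) (r : nat) : F :=
  \sum_(t < l.+1) eta t * hsym ((t.+1)%:Z - r%:Z) alpha.

Definition tgrsG (k l : nat) (eta : 'I_l.+1 -> F) (alpha v : 'I_n -> F)
  : 'M[F]_(k, n) :=
  \matrix_(i < k, j < n)
    (v j * (if (i : nat) == 0%N
            then 1 + \sum_(t < l.+1) eta t * alpha j ^+ (k + t)
            else alpha j ^+ i)).

Definition tgrsH (k l : nat) (eta : 'I_l.+1 -> F) (alpha v : 'I_n -> F)
  : 'M[F]_(n - k, n) :=
  \matrix_(i < n - k, j < n)
    (uj alpha j / v j *
      (if (i + l + 2 <= n - k)%N then alpha j ^+ i
       else alpha j ^+ i - (-1) ^+ n.-1 * Pj alpha j * Omega eta alpha (n - k - i))).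

End TGRS.

From HB Require Import structures.
From mathcomp Require Import all_boot all_order all_algebra zify ring.
Set Implicit Arguments. Unset Strict Implicit. Unset Printing Implicit Defensive.
Import GRing.Theory Num.Theory.
Local Open Scope ring_scope.

(* Write u_j = prod_(i <> j) (alpha_j - alpha_i)^-1.  Lagrange interpolation of the monomials
   [X^m], m < n, at the distinct points alpha_j gives the two moment identities
     sum_j u_j alpha_j^m = [m = n-1]  and  sum_j u_j (-1)^(n-1) P_j alpha_j^m = [m = 0],
   the second by evaluating at 0.  The partial fraction decomposition of prod_i 1/(1 - alpha_i X)
   extends the first to all m: sum_j u_j alpha_j^m = S_(m-n+1)(alpha).  Hence row b of H is
   (u_j/v_j) (alpha_j^b - (-1)^(n-1) P_j omega_b) with omega_b = sum_t eta_t S_(k+t+b-n+1)(alpha),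
   and pairing with the rows of G, whose entries are polynomials of degree <= n-1 in alpha_j,
   gives 0 by the moment identities.  For the rank, a vector x with x H = 0 satisfies
   sum_b x_b omega_b = 0 after pairing with u, so sum_b x_b X^b vanishes at all n points. *)

Section Polynomials.
Variable F : fieldType.
Implicit Types (a : F) (p q : {poly F}).

Lemma coef_mul_1subCX a p i :
  ((1 - a%:P * 'X) * p)`_i = p`_i - a * (if i == 0%N then 0 else p`_i.-1).
Proof. by rewrite mulrBl mul1r coefB -mulrA coefCM coefXM. Qed.

Lemma coef_mul_XsubC a p i :
  (('X - a%:P) * p)`_i = (if i == 0%N then 0 else p`_i.-1) - a * p`_i.
Proof. by rewrite mulrBl coefB coefXM coefCM. Qed.

Lemma coef_prod_1subCX (I : Type) (r : seq I) (P : pred I) (a : I -> F) i :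
  (\prod_(x <- r | P x) (1 - (a x)%:P * 'X))`_i =
  if (i <= count P r)%N
  then (\prod_(x <- r | P x) ('X - (a x)%:P))`_(count P r - i) else 0.
Proof.
elim: r i => [|x r IH] i; first by rewrite !big_nil coef1 coefC; case: i.
rewrite !big_cons /=; case: (P x) => /=; last by rewrite add0n IH.
rewrite coef_mul_1subCX coef_mul_XsubC !IH add1n.
set L := \prod_(_ <- _ | _) _; set N := count P r.
have size_L : size L = N.+1 by rewrite /L -big_filter size_prod_XsubC size_filter.
have LN : L`_N = 1.
  by have := lead_coef_prod_XsubC r P a; rewrite lead_coefE -/L size_L.
have LN1 : L`_N.+1 = 0 by apply: nth_default; rewrite size_L.
case: i => [|i] /=; first by rewrite subn0 LN LN1 mulr0 !subr0.
rewrite subSS ltnS; case: (ltngtP i N) => [iN|Ni|->]; last by rewrite subnn.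
- by rewrite subn_eq0 leqNgt iN subnS.
- by rewrite mulr0 subr0.
Qed.

Definition geom (M : nat) a : {poly F} := \sum_(s < M) (a%:P * 'X) ^+ s.

Lemma mul_1subCX_geom M a : (1 - a%:P * 'X) * geom M a = 1 - (a%:P * 'X) ^+ M.
Proof.
rewrite -[in RHS](expr1n _ M) subrXX /geom.
by congr (_ * _); apply: eq_bigr => i _; rewrite expr1n mul1r.
Qed.

Lemma exprCX a s : (a%:P * 'X) ^+ s = (a ^+ s)%:P * 'X^s.
Proof. by rewrite exprMn rmorphXn. Qed.

Lemma coef_geom M a t : (t < M)%N -> (geom M a)`_t = a ^+ t.
Proof.
move=> tM; rewrite /geom coef_sum (bigD1 (Ordinal tM)) //= big1.
  by rewrite exprCX coefCM coefXn eqxx mulr1 addr0.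
move=> i /eqP ni; rewrite exprCX coefCM coefXn.
by case: eqP => [ti|]; [case: ni; apply: val_inj | rewrite mulr0].
Qed.

Lemma dvdp_Xn_prod_sub1 (I : Type) (r : seq I) (P : pred I) (f : I -> {poly F}) M :
  (forall i, P i -> 'X^M %| f i - 1) -> 'X^M %| \prod_(i <- r | P i) f i - 1.
Proof.
move=> h; apply: (big_ind (fun p => 'X^M %| p - 1)) => [|p q hp hq|//].
  by rewrite subrr dvdp0.
have -> : p * q - 1 = p * (q - 1) + (p - 1) by ring.
by rewrite dvdp_add ?dvdp_mull.
Qed.

Lemma coef_lt_dvdp_Xn M p i : 'X^M %| p -> (i < M)%N -> p`_i = 0.
Proof. by move=> /dvdpP [q ->] iM; rewrite coefMXn iM. Qed.

End Polynomials.

Lemma hsym_lt_subz (F : fieldType) (n m p : nat) (x : 'I_n -> F) :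
  (m < p)%N -> hsym (m%:Z - p%:Z) x = 0.
Proof.
move=> mp; have : (m%:Z - p%:Z < 0)%R by rewrite subr_lt0 ltz_nat.
by case: (_ - _)%R.
Qed.

(* The generating function of [hsym] is [prod_i 1 / (1 - x_i X)]; truncating
   each geometric series at degree [m] does not change the coefficient of [X^m]. *)
Lemma hsym_coef_prod_geom (F : fieldType) (n m : nat) (x : 'I_n -> F) :
  hsym (Posz m) x = (\prod_(i < n) geom m.+1 (x i))`_m.
Proof.
rewrite /geom bigA_distr_bigA coef_sum /hsym big_mkcond; apply: eq_bigr => e _.
under eq_bigr do rewrite exprCX.
rewrite big_split /= -rmorph_prod prodrXr coefCM coefXn eq_sym.
by case: eqP; rewrite ?mulr1 ?mulr0.
Qed.

Lemma count_neq_index_enum (n : nat) (j : 'I_n) :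
  count (fun i => i != j) (index_enum 'I_n) = n.-1.
Proof. by rewrite -sum1_count sum1_card cardC1 card_ord. Qed.

Section Lagrange.
Variables (F : fieldType) (n : nat) (alpha : 'I_n -> F).
Hypothesis alpha_inj : injective alpha.

Definition lagrange_prod (j : 'I_n) : {poly F} :=
  \prod_(i < n | i != j) ('X - (alpha i)%:P).

Lemma prod_sub_alpha_neq0 j : \prod_(i < n | i != j) (alpha j - alpha i) != 0.
Proof.
by apply/prodf_neq0 => i ij; rewrite subr_eq0 (inj_eq alpha_inj) eq_sym.
Qed.

Lemma uj_neq0 j : uj alpha j != 0.
Proof. by rewrite /uj prodfV invr_eq0 prod_sub_alpha_neq0. Qed.

Lemma uj_mul_lagrange_prod j : uj alpha j * (lagrange_prod j).[alpha j] = 1.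
Proof.
rewrite /uj prodfV /lagrange_prod horner_prod.
by rewrite (eq_bigr _ (fun i _ => hornerXsubC _ _)) mulVf ?prod_sub_alpha_neq0.
Qed.

Lemma lagrange_prod_at_other i j : i != j -> (lagrange_prod j).[alpha i] = 0.
Proof.
by move=> ij; rewrite /lagrange_prod horner_prod (bigD1 i) //= hornerXsubC subrr mul0r.
Qed.

Lemma lagrange_prod_at0 j : (lagrange_prod j).[0] = \prod_(i < n | i != j) - alpha i.
Proof.
by rewrite /lagrange_prod horner_prod; under eq_bigr do rewrite hornerXsubC sub0r.
Qed.

Lemma size_lagrange_prod j : size (lagrange_prod j) = n.
Proof.
rewrite /lagrange_prod -big_filter size_prod_XsubC size_filter.
by rewrite count_neq_index_enum; case: n j => [[]|].
Qed.

Lemma coef_lagrange_prod_top j : (lagrange_prod j)`_n.-1 = 1.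
Proof.
have := lead_coef_prod_XsubC (index_enum 'I_n) (fun i => i != j) alpha.
by rewrite lead_coefE -/(lagrange_prod j) size_lagrange_prod.
Qed.

Lemma poly_eq0_at_alpha (p : {poly F}) :
  (size p <= n)%N -> (forall j, p.[alpha j] = 0) -> p = 0.
Proof.
move=> size_p p_root; apply: (@roots_geq_poly_eq0 _ _ [seq alpha i | i <- enum 'I_n]).
- by apply/allP => _ /mapP [i _ ->]; rewrite rootE p_root.
- by rewrite map_inj_uniq ?enum_uniq.
- by rewrite size_map size_enum_ord.
Qed.

Lemma lagrange_interpolation (p : {poly F}) : (size p <= n)%N ->
  p = \sum_j (uj alpha j * p.[alpha j]) *: lagrange_prod j.
Proof.
move=> size_p; apply/eqP; rewrite -subr_eq0; apply/eqP/poly_eq0_at_alpha => [|i].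
  apply: leq_trans (size_polyD _ _) _; rewrite geq_max size_p size_polyN.
  apply: (big_ind (fun q : {poly F} => size q <= n)%N) => [|q r sq sr|j _].
  - by rewrite size_poly0.
  - by apply: leq_trans (size_polyD _ _) _; rewrite geq_max sq.
  - by apply: leq_trans (size_scale_leq _ _) _; rewrite size_lagrange_prod.
rewrite hornerD hornerN horner_sum (bigD1 i) //= big1 => [|j ji].
  by rewrite hornerZ mulrAC uj_mul_lagrange_prod mul1r addr0 subrr.
by rewrite hornerZ lagrange_prod_at_other ?mulr0 1?eq_sym.
Qed.

Lemma sum_uj_expr_lt m : (m < n)%N ->
  \sum_j uj alpha j * alpha j ^+ m = (m == n.-1)%:R.
Proof.
move=> mn; have := @lagrange_interpolation 'X^m; rewrite size_polyXn.
move=> /(_ mn) /(congr1 (fun q : {poly F} => q`_n.-1)).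
rewrite coefXn eq_sym coef_sum => ->; apply: eq_bigr => j _.
by rewrite coefZ coef_lagrange_prod_top mulr1 hornerXn.
Qed.

Lemma sum_uj_prodN_expr m : (m < n)%N ->
  \sum_j uj alpha j * \prod_(i < n | i != j) (- alpha i) * alpha j ^+ m =
  (m == 0)%N%:R.
Proof.
move=> mn; have := @lagrange_interpolation 'X^m; rewrite size_polyXn.
move=> /(_ mn) /(congr1 (fun q : {poly F} => q.[0])).
rewrite hornerXn expr0n horner_sum => ->; apply: eq_bigr => j _.
by rewrite hornerZ lagrange_prod_at0 hornerXn mulrAC.
Qed.

Definition rev_lagrange_prod (j : 'I_n) : {poly F} :=
  \prod_(i < n | i != j) (1 - (alpha i)%:P * 'X).

Lemma coef_rev_lagrange_prod j s : (rev_lagrange_prod j)`_s =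
  if (s <= n.-1)%N then (lagrange_prod j)`_(n.-1 - s) else 0.
Proof.
by rewrite -(count_neq_index_enum j) coef_prod_1subCX.
Qed.

(* Reversing the interpolation of [X^(n-1)] gives the partial fraction decomposition
   [prod_i 1/(1 - alpha_i X) = sum_j c_j / (1 - alpha_j X)], [c_j = u_j alpha_j^(n-1)]. *)
Lemma partial_fractions : (0 < n)%N ->
  \sum_j (uj alpha j * alpha j ^+ n.-1) *: rev_lagrange_prod j = 1.
Proof.
move=> n_gt0; have size_Xn : (size ('X^(n.-1) : {poly F}) <= n)%N.
  by rewrite size_polyXn prednK.
apply/polyP => s; rewrite coef_sum coef1.
have [sn|ns] := leqP s n.-1; last first.
  rewrite big1 => [|j _]; last by rewrite coefZ coef_rev_lagrange_prod leqNgt ns mulr0.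
  by case: s ns.
transitivity (('X^(n.-1) : {poly F})`_(n.-1 - s)).
  rewrite [in RHS](lagrange_interpolation size_Xn) coef_sum; apply: eq_bigr => j _.
  by rewrite !coefZ coef_rev_lagrange_prod sn hornerXn.
by rewrite coefXn; congr (_%:R); apply/eqP/eqP; lia.
Qed.

(* Both sides are coefficients of [X^m] in the two sides of the partial fraction
   decomposition, truncated modulo [X^(m+1)]. *)
Lemma sum_uj_expr_hsym m : (0 < n)%N ->
  \sum_j uj alpha j * alpha j ^+ (m + n.-1) = hsym (Posz m) alpha.
Proof.
move=> n_gt0; set M := m.+1; set c := fun j => uj alpha j * alpha j ^+ n.-1.
set E := \sum_j c j *: geom M (alpha j).
set P := \prod_(i < n) geom M (alpha i).
set R := \prod_(i < n) (1 - (alpha i)%:P * 'X).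
have XM_RP : 'X^M %| R * P - 1.
  rewrite /R /P -big_split /=; apply: dvdp_Xn_prod_sub1 => i _.
  by rewrite mul_1subCX_geom exprCX addrC addKr dvdpNr dvdp_mull.
have XM_RE : 'X^M %| R * E - 1.
  suff -> : R * E - 1 =
      - (\sum_j c j *: ((alpha j ^+ M)%:P * rev_lagrange_prod j)) * 'X^M.
    by rewrite dvdp_mull.
  rewrite -[X in _ - X](partial_fractions n_gt0) /E mulr_sumr -sumrB.
  rewrite mulNr mulr_suml -sumrN; apply: eq_bigr => j _.
  rewrite -scalerAr /R (bigD1 j) //= -/(rev_lagrange_prod j) mulrAC.
  rewrite mul_1subCX_geom exprCX -scalerBr -!scalerAl -scalerN.
  by congr (_ *: _); ring.
have coprime_XM_R : coprimep 'X^M R.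
  rewrite coprimep_expl // coprimep_sym coprimepX rootE horner_prod.
  rewrite (eq_bigr (fun=> 1)) ?big1_eq ?oner_neq0 // => i _.
  by rewrite hornerD hornerN hornerC hornerCM hornerX mulr0 subr0.
have : 'X^M %| E - P.
  rewrite -(Gauss_dvdpr _ coprime_XM_R).
  have -> : R * (E - P) = (R * E - 1) - (R * P - 1) by ring.
  exact: dvdp_sub.
move=> /coef_lt_dvdp_Xn /(_ (ltnSn m)) /eqP; rewrite coefB subr_eq0 => /eqP EP.
rewrite hsym_coef_prod_geom -/M -/P -EP /E coef_sum; apply: eq_bigr => j _.
by rewrite coefZ coef_geom // /c addnC exprD mulrA.
Qed.

Lemma sum_uj_expr m : (0 < n)%N ->
  \sum_j uj alpha j * alpha j ^+ m = hsym (m%:Z - (n.-1)%:Z) alpha.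
Proof.
move=> n_gt0; have [mn|nm] := ltnP m n.-1.
  by rewrite sum_uj_expr_lt ?hsym_lt_subz ?ltn_eqF //; lia.
by rewrite subzn // -sum_uj_expr_hsym // subnK.
Qed.

End Lagrange.

Section ParityCheck.
Variables (F : fieldType) (n : nat) (alpha : 'I_n -> F).

Local Notation negPj j := (\prod_(i < n | i != j) - alpha i).
Hypothesis alpha_inj : injective alpha.

Lemma signr_Pj j : (-1) ^+ n.-1 * Pj alpha j = negPj j.
Proof. by rewrite prodrN cardC1 card_ord. Qed.

Lemma sum_uj_expr_mul_rowH e b w : (e < n)%N ->
  \sum_j uj alpha j * alpha j ^+ e * (alpha j ^+ b - negPj j * w) =
  hsym ((e + b)%:Z - (n.-1)%:Z) alpha - w * (e == 0)%N%:R.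
Proof.
move=> en; have n_gt0 : (0 < n)%N by lia.
rewrite -(sum_uj_expr alpha_inj) // -(sum_uj_prodN_expr alpha_inj en) mulr_sumr -sumrB.
by apply: eq_bigr => j _; rewrite exprD; ring.
Qed.

Lemma row_free_perturbed_vandermonde m (c : 'I_n -> F) (w : 'I_m -> F) :
  (m < n)%N -> (forall j, c j != 0) ->
  row_free (\matrix_(b < m, j < n) (c j * (alpha j ^+ b - negPj j * w b))).
Proof.
move=> mn c_neq0; apply: inj_row_free => x xH0.
pose h (b : 'I_m) j := alpha j ^+ b - negPj j * w b.
have xh0 j : \sum_(b < m) x 0 b * h b j = 0.
  have /matrixP /(_ 0 j) := xH0; rewrite !mxE.
  under eq_bigr do rewrite mxE mulrCA.
  by rewrite -mulr_sumr => /eqP; rewrite mulf_eq0 (negPf (c_neq0 j)) => /eqP.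
pose kappa := \sum_(b < m) x 0 b * w b.
(* Pairing the rows with [u_j] kills their monomial parts and leaves [- w b]. *)
have kappa0 : kappa = 0.
  transitivity (- \sum_(b < m) x 0 b * \sum_j uj alpha j * alpha j ^+ 0 * h b j).
    rewrite -sumrN; apply: eq_bigr => b _; have := ltn_ord b => bm.
    by rewrite sum_uj_expr_mul_rowH ?hsym_lt_subz ?mulr1 ?sub0r ?mulrN ?opprK //; lia.
  under eq_bigr do rewrite mulr_sumr.
  rewrite exchange_big big1 ?oppr0 //= => j _.
  rewrite -[RHS](mulr0 (uj alpha j * alpha j ^+ 0)) -[in RHS](xh0 j) mulr_sumr.
  by apply: eq_bigr => b _; ring.
pose q := rVpoly x.
have q_root j : q.[alpha j] = 0.
  transitivity (\sum_(b < m) x 0 b * h b j + negPj j * kappa).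
    rewrite horner_poly /kappa mulr_sumr -big_split.
    by apply: eq_bigr => b _ /=; rewrite valK /h; ring.
  by rewrite xh0 kappa0 mulr0 addr0.
have q0 : q = 0.
  apply: (poly_eq0_at_alpha alpha_inj) q_root.
  by apply: leq_trans (size_poly _ _) _; apply: ltnW.
by rewrite -[x]rVpolyK -/q q0 linear0.
Qed.

Section Code.
Variables (k l : nat) (eta : 'I_l.+1 -> F) (v : 'I_n -> F).
Hypothesis kln : (k + l.+1 <= n)%N.

Local Notation omega b :=
  (\sum_(t < l.+1) eta t * hsym ((k + t + b)%:Z - (n.-1)%:Z) alpha).

(* For the rows [b + l + 2 <= n - k] every index of [omega b] is negative. *)
Lemma tgrsH_hsymE : tgrsH k eta alpha v =
  \matrix_(b < n - k, j < n) (uj alpha j / v j * (alpha j ^+ b - negPj j * omega b)).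
Proof.
apply/matrixP => b j; rewrite !mxE signr_Pj; congr (_ * _).
have := ltn_ord b; case: ifP => [bl|bl] bn.
  suff -> : omega b = 0 by rewrite mulr0 subr0.
  by apply: big1 => t _; rewrite hsym_lt_subz ?mulr0 //; have := ltn_ord t; lia.
by congr (_ - _ * _); apply: eq_bigr => t _; congr (_ * hsym _ _); lia.
Qed.

Lemma tgrsG_mul_tgrsH_tr : (0 < k)%N -> (forall j, v j != 0) ->
  tgrsG k eta alpha v *m (tgrsH k eta alpha v)^T = 0.
Proof.
move=> k_gt0 v_neq0; rewrite tgrsH_hsymE; apply/matrixP => a b; rewrite !mxE.
have ha := ltn_ord a; have hb := ltn_ord b.
pose h j := alpha j ^+ b - negPj j * omega b.
have cancel_v j (g : F) : v j * g * (uj alpha j / v j * h j) = uj alpha j * g * h j.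
  by move: (v_neq0 j) => vj; field.
under eq_bigr do rewrite !mxE cancel_v.
case: eqP => [a0|/eqP a0]; last first.
  rewrite sum_uj_expr_mul_rowH ?hsym_lt_subz ?(negPf a0) ?mulr0 ?subr0 //; lia.
transitivity (\sum_j uj alpha j * alpha j ^+ 0 * h j +
    \sum_(t < l.+1) \sum_j eta t * (uj alpha j * alpha j ^+ (k + t) * h j)).
  rewrite exchange_big -big_split /=; apply: eq_bigr => j _.
  rewrite [X in _ = _ + X](_ : _ = uj alpha j *
      (\sum_(t < l.+1) eta t * alpha j ^+ (k + t)) * h j); first by rewrite expr0; ring.
  by rewrite mulr_sumr mulr_suml; apply: eq_bigr => t _; ring.
rewrite sum_uj_expr_mul_rowH ?hsym_lt_subz /=; try lia.
rewrite mulr1 sub0r [X in _ + X](eq_bigr (fun t =>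
  eta t * hsym ((k + t + b)%:Z - (n.-1)%:Z) alpha)).
  by rewrite addNr.
move=> t _; have := ltn_ord t => tl.
rewrite -mulr_sumr sum_uj_expr_mul_rowH; last by lia.
by rewrite (_ : k + t == 0 = false)%N ?mulr0 ?subr0 //; lia.
Qed.

End Code.
End ParityCheck.

Theorem theorem3p1 (F : finFieldType) (n k l : nat)
  (alpha v : 'I_n -> F) (eta : 'I_l.+1 -> F) :
  odd #|F| ->
  (2 <= k)%N -> (k + l.+1 <= n)%N ->
  injective alpha ->
  (forall j, v j != 0) ->
  (exists t, eta t != 0) ->
  \rank (tgrsH k eta alpha v) = (n - k)%N /\
  tgrsG k eta alpha v *m (tgrsH k eta alpha v)^T = 0.
Proof.
move=> _ k_ge2 kln alpha_inj v_neq0 _; have k_gt0 : (0 < k)%N by lia.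
split; last exact: tgrsG_mul_tgrsH_tr.
rewrite tgrsH_hsymE //; apply/eqP/(row_free_perturbed_vandermonde alpha_inj) => [|j].
  by lia.
by rewrite mulf_neq0 ?invr_eq0 ?uj_neq0.
Qed.
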